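(* For a metrizable topological group $G$ which is Weil complete (i.e. complete with respect to its left uniformity), the following are equivalent: (i) $G$ is NSS; (ii) $G$ is STAP; (iii) $G$ is HTAP; (iv) $G$ is TAP.
   Context: $e$ is the neutral element; $\prod_{k=1}^n a_k=a_1\cdots a_n$. $G$ is NSS if some neighborhood of $e$ contains no nontrivial subgroup of $G$. A sequence $(g_n)$ in $G$ is hyper-multipliable if for every integer sequence $(m_n)$ the sequence $\left(\prod_{k=1}^n g_k^{m_k}\right)_n$ converges in $G$; hyper-converging if $g_n^{m_n}\to e$ for every integer sequence $(m_n)$. A subset $A\subset G$ is absolutely productive if every sequence of pairwise distinct elements of $A$ is hyper-multipliable. $G$ is TAP if every absolutely productive subset is finite; HTAP if no sequence of pairwise distinct elements is hyper-multipliable; STAP if no sequence of pairwise distinct elements is hyper-converging. *)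

From Stdlib Require Import Reals ZArith List.
Open Scope R_scope.

Record TopGroup := {
  carrier :> Type;
  mul : carrier -> carrier -> carrier;
  inv : carrier -> carrier;
  one : carrier;
  mul_assoc : forall x y z, mul x (mul y z) = mul (mul x y) z;
  mul_1l : forall x, mul one x = x;
  mul_1r : forall x, mul x one = x;
  mul_Vl : forall x, mul (inv x) x = one;
  mul_Vr : forall x, mul x (inv x) = one;
  is_open : (carrier -> Prop) -> Prop;
  open_full : is_open (fun _ => True);
  open_inter : forall U V, is_open U -> is_open V ->
                 is_open (fun x => U x /\ V x);
  open_union : forall (I : Type) (F : I -> carrier -> Prop),
                 (forall i, is_open (F i)) -> is_open (fun x => exists i, F i x);
  mul_cont : forall x y (W : carrier -> Prop), is_open W -> W (mul x y) ->
               exists U V : carrier -> Prop, is_open U /\ is_open V /\ U x /\ V y /\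
                 (forall a b, U a -> V b -> W (mul a b));
  inv_cont : forall W, is_open W -> is_open (fun x => W (inv x))
}.

Arguments mul {G} : rename.
Arguments inv {G} : rename.
Arguments one {G} : rename.
Arguments is_open {G} : rename.

Section Defs.
Variable G : TopGroup.

Definition nbhd (U : G -> Prop) (x : G) : Prop :=
  exists V, is_open V /\ V x /\ forall y, V y -> U y.

Fixpoint npow (x : G) (n : nat) : G :=
  match n with O => one | S k => mul (npow x k) x end.

Definition zpow (x : G) (m : Z) : G :=
  match m with
  | Z0 => one
  | Zpos p => npow x (Pos.to_nat p)
  | Zneg p => inv (npow x (Pos.to_nat p))
  end.

Fixpoint prodn (f : nat -> G) (n : nat) : G :=
  match n with O => f O | S k => mul (prodn f k) (f (S k)) end.

Definition seq_converges (s : nat -> G) (x : G) : Prop :=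
  forall U, is_open U -> U x -> exists N, forall n, (N <= n)%nat -> U (s n).

Definition seq_convergent (s : nat -> G) : Prop := exists x, seq_converges s x.

Definition injective_seq (g : nat -> G) : Prop :=
  forall i j, g i = g j -> i = j.

Definition hyper_multipliable (g : nat -> G) : Prop :=
  forall m : nat -> Z, seq_convergent (prodn (fun k => zpow (g k) (m k))).

Definition hyper_converging (g : nat -> G) : Prop :=
  forall m : nat -> Z, seq_converges (fun n => zpow (g n) (m n)) one.

Definition absolutely_productive (A : G -> Prop) : Prop :=
  forall g : nat -> G, injective_seq g -> (forall n, A (g n)) -> hyper_multipliable g.

Definition finite_set (A : G -> Prop) : Prop :=
  exists l : list G, forall x, A x -> In x l.

Definition is_subgroup (H : G -> Prop) : Prop :=
  H one /\ (forall x y, H x -> H y -> H (mul x y)) /\ (forall x, H x -> H (inv x)).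

Definition NSS : Prop :=
  exists U, nbhd U one /\
    forall H, is_subgroup H -> (forall x, H x -> U x) -> forall x, H x -> x = one.

Definition TAP : Prop :=
  forall A, absolutely_productive A -> finite_set A.

Definition HTAP : Prop :=
  forall g : nat -> G, injective_seq g -> ~ hyper_multipliable g.

Definition STAP : Prop :=
  forall g : nat -> G, injective_seq g -> ~ hyper_converging g.

Definition metrizable : Prop :=
  exists d : G -> G -> R,
    (forall x y, 0 <= d x y) /\
    (forall x y, d x y = 0 <-> x = y) /\
    (forall x y, d x y = d y x) /\
    (forall x y z, d x z <= d x y + d y z) /\
    (forall U : G -> Prop, is_open U <->
       forall x, U x -> exists eps, 0 < eps /\ forall y, d x y < eps -> U y).

(* filters, and completeness w.r.t. the left uniformity
   (entourages {(x,y) | x^-1 y in U}, U neighborhood of e) *)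
Definition proper_filter (F : (G -> Prop) -> Prop) : Prop :=
  F (fun _ => True) /\
  (forall A B, F A -> F B -> F (fun x => A x /\ B x)) /\
  (forall A B : G -> Prop, F A -> (forall x, A x -> B x) -> F B) /\
  ~ F (fun _ => False).

Definition left_cauchy (F : (G -> Prop) -> Prop) : Prop :=
  forall U, nbhd U one ->
    exists A, F A /\ forall x y, A x -> A y -> U (mul (inv x) y).

Definition filter_converges (F : (G -> Prop) -> Prop) (x : G) : Prop :=
  forall U, nbhd U x -> F U.

Definition weil_complete : Prop :=
  forall F, proper_filter F -> left_cauchy F -> exists x, filter_converges F x.

End Defs.

From Stdlib Require Import Reals ZArith List Lia Lra Classical ClassicalEpsilon.

(* The chain NSS -> STAP -> HTAP -> TAP holds in every topological group:
   - NSS gives an open neighbourhood V of e such that every x <> e has a power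
     outside V, which a hyper-converging injective sequence cannot have;
   - the quotients (x_{n-1})^-1 x_n of a convergent sequence of partial
     products tend to e, so hyper-multipliable implies hyper-converging;
   - an infinite set contains an injective sequence.
   The converse TAP -> NSS is proved by contraposition.  If G is not NSS we
   build open neighbourhoods W_0, W_1, ... of e with W_{n+1}^3 inside W_n and
   W_{n+1} inside the metric ball of radius 1/(n+1), and pick g_n <> e whose
   powers all stay in W_n.  A Kakutani-type lemma shows that any product of
   elements of W_{s_i} with pairwise distinct indices s_i > N lies in W_N;
   hence partial products of powers of distinct g_n's form a left Cauchy
   sequence, which converges by Weil completeness.  So {g_n} is absolutely
   productive, yet it is infinite since g_n -> e and g_n <> e. *)

Section GroupAlgebra.
Variable G : TopGroup.

Lemma inv_one : inv (@one G) = one.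
Proof. rewrite <- (mul_1r G (inv one)). apply mul_Vl. Qed.

Lemma inv_inv (x : G) : inv (inv x) = x.
Proof.
  rewrite <- (mul_1r G (inv (inv x))), <- (mul_Vl G x).
  rewrite mul_assoc, mul_Vl, mul_1l. reflexivity.
Qed.

Lemma mul_cancel_l (a b : G) : mul (inv a) (mul a b) = b.
Proof. rewrite mul_assoc, mul_Vl, mul_1l. reflexivity. Qed.

Lemma inv_uniq (y z : G) : mul y z = one -> inv y = z.
Proof. intros H. rewrite <- (mul_cancel_l y z), H, mul_1r. reflexivity. Qed.

Lemma inv_mul (a b : G) : inv (mul a b) = mul (inv b) (inv a).
Proof.
  apply inv_uniq.
  rewrite <- mul_assoc, (mul_assoc G b), mul_Vr, mul_1l, mul_Vr. reflexivity.
Qed.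

Lemma npow_comm (x : G) n : mul (npow G x n) x = mul x (npow G x n).
Proof.
  induction n as [|n IH]; simpl.
  - rewrite mul_1l, mul_1r. reflexivity.
  - rewrite IH at 1. symmetry. apply mul_assoc.
Qed.

Lemma zpow_succ (x : G) a : zpow G x (Z.succ a) = mul (zpow G x a) x.
Proof.
  destruct a as [|p|p].
  - reflexivity.
  - replace (Z.succ (Z.pos p)) with (Z.pos (Pos.succ p)) by lia. simpl.
    rewrite Pos2Nat.inj_succ. reflexivity.
  - destruct (Pos.eq_dec p 1) as [->|Hp].
    + simpl. rewrite mul_1l, mul_Vl. reflexivity.
    + replace (Z.succ (Z.neg p)) with (Z.neg (Pos.pred p)) by lia. simpl.
      replace (Pos.to_nat p) with (S (Pos.to_nat (Pos.pred p))) by lia. simpl.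
      rewrite npow_comm, inv_mul, <- mul_assoc, mul_Vl, mul_1r. reflexivity.
Qed.

Lemma zpow_pred (x : G) a : zpow G x (Z.pred a) = mul (zpow G x a) (inv x).
Proof.
  rewrite <- (Z.succ_pred a) at 2.
  rewrite zpow_succ, <- mul_assoc, mul_Vr, mul_1r. reflexivity.
Qed.

Lemma zpow_add (x : G) a b : zpow G x (a + b) = mul (zpow G x a) (zpow G x b).
Proof.
  induction b as [|b IH|b IH] using Z.peano_ind.
  - rewrite Z.add_0_r. simpl. rewrite mul_1r. reflexivity.
  - rewrite Z.add_succ_r, !zpow_succ, IH, mul_assoc. reflexivity.
  - rewrite Z.add_pred_r, !zpow_pred, IH, mul_assoc. reflexivity.
Qed.

Lemma zpow_opp (x : G) a : zpow G x (- a) = inv (zpow G x a).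
Proof. destruct a; simpl; [rewrite inv_one | | rewrite inv_inv]; reflexivity. Qed.

Lemma zpow_1 (x : G) : zpow G x 1 = x.
Proof. apply mul_1l. Qed.

Lemma subgroup_zpow (H : G -> Prop) x m : is_subgroup G H -> H x -> H (zpow G x m).
Proof.
  intros [H1 [Hmul Hinv]] Hx.
  assert (Hn : forall n, H (npow G x n)) by (induction n; simpl; auto).
  destruct m; simpl; auto.
Qed.

Lemma cyclic_subgroup (x : G) : is_subgroup G (fun y => exists m, y = zpow G x m).
Proof.
  split; [|split].
  - exists 0%Z. reflexivity.
  - intros a b [m1 ->] [m2 ->]. exists (m1 + m2)%Z. symmetry. apply zpow_add.
  - intros a [m ->]. exists (- m)%Z. symmetry. apply zpow_opp.
Qed.

(* Segment products: segprod f a k = f (a+1) * ... * f (a+k). *)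
Fixpoint segprod (f : nat -> G) (a k : nat) : G :=
  match k with O => one | S k => mul (segprod f a k) (f (S (a + k))) end.

Lemma prodn_segprod (f : nat -> G) a k :
  prodn G f (a + k) = mul (prodn G f a) (segprod f a k).
Proof.
  induction k as [|k IH]; simpl.
  - rewrite Nat.add_0_r, mul_1r. reflexivity.
  - rewrite Nat.add_succ_r. simpl. rewrite IH, mul_assoc. reflexivity.
Qed.

Lemma segprod_split (f : nat -> G) a j k :
  segprod f a (j + k) = mul (segprod f a j) (segprod f (a + j) k).
Proof.
  induction k as [|k IH]; simpl.
  - rewrite Nat.add_0_r, mul_1r. reflexivity.
  - rewrite Nat.add_succ_r. simpl. rewrite IH, <- mul_assoc, Nat.add_assoc. reflexivity.
Qed.

Lemma segprod_pivot (f : nat -> G) a j k :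
  segprod f a (j + S k) = mul (segprod f a j) (mul (f (S (a + j))) (segprod f (S (a + j)) k)).
Proof.
  rewrite segprod_split. f_equal.
  change (S k) with (1 + k)%nat. rewrite segprod_split. simpl.
  rewrite mul_1l, Nat.add_0_r, Nat.add_1_r. reflexivity.
Qed.

End GroupAlgebra.

Section SmallSubgroups.
Variable G : TopGroup.

Lemma NSS_iff_no_small_cyclic :
  NSS G <-> exists V, is_open V /\ V one /\
    forall x : G, (forall m, V (zpow G x m)) -> x = one.
Proof.
  split.
  - intros [U [[V [HVo [HV1 HVU]]] HN]]. exists V. split; [exact HVo | split; [exact HV1|]].
    intros x Hx. apply (HN (fun y => exists m, y = zpow G x m)).
    + apply cyclic_subgroup.
    + intros y [m ->]. apply HVU, Hx.
    + exists 1%Z. symmetry. apply zpow_1.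
  - intros [V [HVo [HV1 HV]]]. exists V. split.
    + exists V. auto.
    + intros H HH HHV x Hx. apply HV. intro m. apply HHV, subgroup_zpow; assumption.
Qed.

Lemma nss_stap : NSS G -> STAP G.
Proof.
  intros HN g Hinj Hhc.
  destruct (proj1 NSS_iff_no_small_cyclic HN) as [V [HVo [HV1 HV]]].
  assert (Hescape : forall n, exists m, g n <> one -> ~ V (zpow G (g n) m)).
  { intro n. destruct (classic (exists m, ~ V (zpow G (g n) m))) as [[m Hm]|Hno].
    - exists m. auto.
    - exists 0%Z. intros Hne _. apply Hne, HV. intro m.
      apply NNPP. intro Hm. apply Hno. eauto. }
  destruct (choice _ Hescape) as [m Hm].
  destruct (Hhc m V HVo HV1) as [N HN'].
  assert (Hnontriv : g N <> one \/ g (S N) <> one).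
  { apply NNPP. intro Hc. apply not_or_and in Hc as [H0 H1].
    apply NNPP in H0, H1. rewrite <- H1 in H0. apply Hinj in H0. lia. }
  destruct Hnontriv as [Hne|Hne]; eapply Hm; [exact Hne| |exact Hne|]; apply HN'; lia.
Qed.

Lemma consecutive_quotients (s : nat -> G) :
  seq_convergent G s -> seq_converges G (fun n => mul (inv (s n)) (s (S n))) one.
Proof.
  intros [x Hx] W HWo HW1. rewrite <- (mul_Vl G x) in HW1.
  destruct (mul_cont G _ _ W HWo HW1) as [U [V [HUo [HVo [HU [HV HUV]]]]]].
  destruct (Hx (fun y => U (inv y) /\ V y)) as [N HN].
  - apply open_inter; [apply inv_cont|]; assumption.
  - split; assumption.
  - exists N. intros n Hn. apply HUV; [apply (HN n) | apply (HN (S n))]; lia.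
Qed.

Lemma stap_htap : STAP G -> HTAP G.
Proof.
  intros Hs g Hinj Hhm. apply (Hs g Hinj). intros m W HWo HW1.
  destruct (consecutive_quotients _ (Hhm m) W HWo HW1) as [N HN].
  exists (S N). intros [|k] Hk; [lia|].
  specialize (HN k ltac:(lia)). simpl in HN. rewrite mul_cancel_l in HN. exact HN.
Qed.

Lemma infinite_injective_seq (A : G -> Prop) :
  ~ finite_set G A -> exists g, injective_seq G g /\ forall n, A (g n).
Proof.
  intros Hinf.
  assert (Hfresh : forall l : list G, exists x, A x /\ ~ In x l).
  { intro l. apply NNPP. intro Hc. apply Hinf. exists l. intros x Ax.
    apply NNPP. intro Hn. apply Hc. eauto. }
  destruct (choice _ Hfresh) as [fresh Hf].
  set (L := fix L n := match n with O => nil | S k => fresh (L k) :: L k end).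
  exists (fun n => fresh (L n)).
  assert (Hin : forall i j, (i < j)%nat -> In (fresh (L i)) (L j)).
  { intros i j Hij. induction j as [|j IH]; [lia|]. simpl.
    destruct (Nat.eq_dec i j) as [->|Hne]; [left | right; apply IH; lia]; reflexivity. }
  split; [|intro n; apply Hf].
  intros i j E. destruct (lt_eq_lt_dec i j) as [[Hl|He]|Hl]; [exfalso| exact He |exfalso].
  - apply (proj2 (Hf (L j))). rewrite <- E. auto.
  - apply (proj2 (Hf (L i))). rewrite E. auto.
Qed.

Lemma htap_tap : HTAP G -> TAP G.
Proof.
  intros Hh A HA. apply NNPP. intro Hinf.
  destruct (infinite_injective_seq A Hinf) as [g [Hinj HgA]].
  exact (Hh g Hinj (HA g Hinj HgA)).
Qed.

End SmallSubgroups.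

Section Completeness.
Variable G : TopGroup.

(* Sequential left Cauchy condition (only pairs a <= b are needed). *)
Definition left_cauchy_seq (x : nat -> G) : Prop :=
  forall U, nbhd G U one -> exists K, forall a b, (K <= a <= b)%nat -> U (mul (inv (x a)) (x b)).

(* In a Weil-complete group every left Cauchy sequence converges: its filter
   of tails is a proper left Cauchy filter. *)
Lemma weil_complete_seq (x : nat -> G) :
  weil_complete G -> left_cauchy_seq x -> seq_convergent G x.
Proof.
  intros Hcomp Hx.
  set (F := fun B : G -> Prop => exists N, forall n, (N <= n)%nat -> B (x n)).
  assert (HF : proper_filter G F).
  { split; [|split; [|split]].
    - exists 0%nat. auto.
    - intros B C [N1 H1] [N2 H2]. exists (Nat.max N1 N2). intros n Hn.
      split; [apply H1 | apply H2]; lia.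
    - intros B C [N HN] HBC. exists N. auto.
    - intros [N HN]. exact (HN N (le_n N)). }
  assert (HC : left_cauchy G F).
  { intros U [V [HVo [HV1 HVU]]].
    destruct (Hx (fun y => U y /\ U (inv y))) as [K HK].
    { exists (fun y => V y /\ V (inv y)). split; [apply open_inter; [|apply inv_cont]; exact HVo|].
      rewrite inv_one. split; [split; exact HV1|]. intros y [Hy Hy']. split; apply HVU; assumption. }
    exists (fun z => exists k, (K <= k)%nat /\ z = x k). split; [exists K; eauto|].
    intros y z [a [Ha ->]] [b [Hb ->]]. destruct (le_lt_dec a b) as [Hab|Hab].
    - apply (HK a b). lia.
    - rewrite <- (inv_inv G (x b)), <- inv_mul. apply (HK b a). lia. }
  destruct (Hcomp F HF HC) as [z Hz]. exists z.
  intros U HUo HUz. apply Hz. exists U. auto.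
Qed.

End Completeness.

Section Kakutani.
Variable G : TopGroup.
Variable W : nat -> G -> Prop.
Hypothesis W_one : forall n, W n one.
Hypothesis W_cube : forall n a b c,
  W (S n) a -> W (S n) b -> W (S n) c -> W n (mul a (mul b c)).

Lemma W_decreasing n y : W (S n) y -> W n y.
Proof.
  intros Hy. pose proof (W_cube n y one one Hy (W_one _) (W_one _)) as H.
  rewrite mul_1l, mul_1r in H. exact H.
Qed.

Variable s : nat -> nat.
Hypothesis s_inj : forall i j, s i = s j -> i = j.
Variable f : nat -> G.
Hypothesis f_in_W : forall i, W (s i) (f i).

(* Induction on t: the indices s i of the segment lie in (N, N + t].  Either
   the index N+1 occurs, at a unique position splitting the segment into two
   segments with indices in (N+1, N+t], or all indices already exceed N+1. *)
Lemma kakutani_bounded t : forall N a k,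
  (forall i, (a < i <= a + k)%nat -> (N < s i <= N + t)%nat) -> W N (segprod G f a k).
Proof.
  induction t as [|t IH]; intros N a k Hs.
  - destruct k as [|k]; [apply W_one|]. specialize (Hs (S (a + k))). lia.
  - destruct (classic (exists i, (a < i <= a + k)%nat /\ s i = S N)) as [[i [Hi Hsi]]|Hno].
    + assert (Hother : forall i', (a < i' <= a + k)%nat -> i' <> i -> (S N < s i' <= S N + t)%nat).
      { intros i' Hi' Hne. specialize (Hs i' Hi').
        assert (s i' <> S N) by (intro E; apply Hne, s_inj; congruence). lia. }
      replace k with ((i - S a) + S (a + k - i))%nat by lia.
      rewrite segprod_pivot. replace (S (a + (i - S a))) with i by lia.
      apply W_cube.
      * apply IH. intros i' Hi'. apply Hother; lia.
      * rewrite <- Hsi. apply f_in_W.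
      * apply IH. intros i' Hi'. apply Hother; lia.
    + apply W_decreasing, IH. intros i Hi. specialize (Hs i Hi).
      assert (s i <> S N) by (intro E; apply Hno; eauto). lia.
Qed.

Lemma bounded_on_prefix n : exists B, forall i, (i <= n)%nat -> (s i <= B)%nat.
Proof.
  induction n as [|n [B HB]].
  - exists (s 0%nat). intros i Hi. replace i with 0%nat by lia. lia.
  - exists (Nat.max B (s (S n))). intros i Hi.
    destruct (Nat.eq_dec i (S n)) as [->|Hne]; [lia|]. specialize (HB i ltac:(lia)). lia.
Qed.

Lemma kakutani N a k :
  (forall i, (a < i)%nat -> (N < s i)%nat) -> W N (segprod G f a k).
Proof.
  intros Hs. destruct (bounded_on_prefix (a + k)) as [B HB].
  apply (kakutani_bounded B). intros i Hi. specialize (Hs i ltac:(lia)).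
  specialize (HB i ltac:(lia)). lia.
Qed.

End Kakutani.

Lemma injective_tends_to_infinity (s : nat -> nat) : (forall i j, s i = s j -> i = j) ->
  forall N, exists K, forall k, (K <= k)%nat -> (N <= s k)%nat.
Proof.
  intros Hs N. induction N as [|N [K HK]]; [exists 0%nat; intros; lia|].
  destruct (classic (exists k0, s k0 = N)) as [[k0 Hk0]|Hno].
  - exists (Nat.max K (S k0)). intros k Hk. specialize (HK k ltac:(lia)).
    destruct (Nat.eq_dec (s k) N) as [E|E]; [|lia].
    rewrite <- Hk0 in E. apply Hs in E. lia.
  - exists K. intros k Hk. specialize (HK k Hk).
    destruct (Nat.eq_dec (s k) N) as [E|E]; [exfalso; eauto | lia].
Qed.

Section AbsolutelyProductive.
Variable G : TopGroup.
Hypothesis G_complete : weil_complete G.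
Variable W : nat -> G -> Prop.
Hypothesis W_one : forall n, W n one.
Hypothesis W_cube : forall n a b c,
  W (S n) a -> W (S n) b -> W (S n) c -> W n (mul a (mul b c)).
Hypothesis W_base : forall U, nbhd G U one -> exists n, forall y, W n y -> U y.
Variable g : nat -> G.
Hypothesis g_powers : forall n m, W n (zpow G (g n) m).

(* If every power of g n lies in W n, the set {g n} is absolutely productive:
   partial products of powers of distinct g n's are left Cauchy. *)
Lemma range_absolutely_productive : absolutely_productive G (fun y => exists n, y = g n).
Proof.
  intros h Hinj Hh m.
  destruct (choice _ Hh) as [s Hs].
  assert (s_inj : forall i j, s i = s j -> i = j).
  { intros i j E. apply Hinj. rewrite (Hs i), (Hs j), E. reflexivity. }
  set (f := fun k => zpow G (h k) (m k)).
  assert (f_in_W : forall k, W (s k) (f k)) by (intro k; unfold f; rewrite (Hs k); apply g_powers).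
  apply weil_complete_seq; [exact G_complete|].
  intros U HU. destruct (W_base U HU) as [n Hn].
  destruct (injective_tends_to_infinity s s_inj (S n)) as [K HK].
  exists K. intros a b Hab.
  replace b with (a + (b - a))%nat by lia. rewrite prodn_segprod, mul_cancel_l.
  apply Hn, (kakutani G W W_one W_cube s s_inj f f_in_W).
  intros i Hi. specialize (HK i ltac:(lia)). lia.
Qed.

End AbsolutelyProductive.

Section NestedNeighbourhoods.
Variable G : TopGroup.

Lemma cube_root_nbhd (W B : G -> Prop) : is_open W -> W one -> is_open B -> B one ->
  exists V, is_open V /\ V one /\ (forall y, V y -> B y) /\
    (forall a b c, V a -> V b -> V c -> W (mul a (mul b c))).
Proof.
  intros HWo HW1 HBo HB1.
  rewrite <- (mul_1l G one) in HW1.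
  destruct (mul_cont G _ _ W HWo HW1) as [U1 [V1 [HU1o [HV1o [HU1 [HV1 H1]]]]]].
  rewrite <- (mul_1l G one) in HV1.
  destruct (mul_cont G _ _ V1 HV1o HV1) as [U2 [V2 [HU2o [HV2o [HU2 [HV2 H2]]]]]].
  exists (fun y => U1 y /\ U2 y /\ V2 y /\ B y).
  split; [repeat apply open_inter; assumption|].
  split; [repeat split; assumption|].
  split; [intros y Hy; apply Hy|].
  intros a b c Ha Hb Hc. apply H1; [apply Ha | apply H2; [apply Hb | apply Hc]].
Qed.

Lemma nested_cube_nbhds (B : nat -> G -> Prop) : (forall n, is_open (B n) /\ B n one) ->
  exists W : nat -> G -> Prop, (forall n, is_open (W n) /\ W n one) /\
    (forall n y, W (S n) y -> B n y) /\
    (forall n a b c, W (S n) a -> W (S n) b -> W (S n) c -> W n (mul a (mul b c))).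
Proof.
  intros HB.
  assert (step : forall n (V : {V : G -> Prop | is_open V /\ V one}),
    {V' : G -> Prop | (is_open V' /\ V' one) /\ (forall y, V' y -> B n y) /\
       (forall a b c, V' a -> V' b -> V' c -> proj1_sig V (mul a (mul b c)))}).
  { intros n [V [HVo HV1]]. apply constructive_indefinite_description.
    destruct (cube_root_nbhd V (B n) HVo HV1 (proj1 (HB n)) (proj2 (HB n)))
      as [V' [HV'o [HV'1 HV']]].
    exists V'. auto. }
  set (chain := fix chain n : {V : G -> Prop | is_open V /\ V one} :=
    match n with
    | O => exist _ (fun _ => True) (conj (open_full G) I)
    | S k => exist _ (proj1_sig (step k (chain k))) (proj1 (proj2_sig (step k (chain k))))
    end).
  exists (fun n => proj1_sig (chain n)).
  split; [intro n; exact (proj2_sig (chain n))|].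
  split; intros n; apply (proj2_sig (step n (chain n))).
Qed.

End NestedNeighbourhoods.

Section Metric.
Variable G : TopGroup.
Variable d : G -> G -> R.
Hypothesis d_nonneg : forall x y, 0 <= d x y.
Hypothesis d_zero : forall x y, d x y = 0 <-> x = y.
Hypothesis d_triangle : forall x y z, d x z <= d x y + d y z.
Hypothesis d_open : forall U : G -> Prop, is_open U <->
  forall x, U x -> exists eps, 0 < eps /\ forall y, d x y < eps -> U y.

Lemma small_inverse eps : 0 < eps -> exists n : nat, / INR (S n) < eps.
Proof.
  intros He. destruct (INR_unbounded (/ eps)) as [n Hn]. exists n.
  rewrite S_INR, <- (Rinv_inv eps).
  assert (0 < / eps) by (apply Rinv_0_lt_compat; lra).
  apply Rinv_lt_contravar; [apply Rmult_lt_0_compat|]; lra.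
Qed.

Definition ball (n : nat) (y : G) : Prop := d one y < / INR (S n).

Lemma ball_open_nbhd n : is_open (ball n) /\ ball n one.
Proof.
  assert (0 < / INR (S n)) by (apply Rinv_0_lt_compat, lt_0_INR; lia).
  split.
  - apply d_open. intros x Hx. exists (/ INR (S n) - d one x). split; [unfold ball in Hx; lra|].
    intros y Hy. unfold ball. pose proof (d_triangle one x y). lra.
  - unfold ball. rewrite (proj2 (d_zero one one) eq_refl). assumption.
Qed.

Lemma ball_antitone n k y : (n <= k)%nat -> ball k y -> ball n y.
Proof.
  unfold ball. intros Hnk Hy. eapply Rlt_le_trans; [exact Hy|].
  apply Rinv_le_contravar; [apply lt_0_INR; lia | apply le_INR; lia].
Qed.

Lemma ball_base U : nbhd G U one -> exists n, forall y, ball n y -> U y.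
Proof.
  intros [V [HVo [HV1 HVU]]].
  destruct (proj1 (d_open V) HVo one HV1) as [eps [Heps HV]].
  destruct (small_inverse eps Heps) as [n Hn]. exists n.
  intros y Hy. apply HVU, HV. unfold ball in Hy. lra.
Qed.

Lemma finite_avoids_ball (l : list G) : exists n, forall y, In y l -> ball n y -> y = one.
Proof.
  induction l as [|a l [n Hn]]; [exists 0%nat; simpl; tauto|].
  destruct (classic (a = one)) as [Ea|Ea].
  - exists n. intros y [<-|Hy] Hb; [exact Ea | exact (Hn y Hy Hb)].
  - assert (Hpos : 0 < d one a).
    { destruct (Rle_lt_or_eq_dec _ _ (d_nonneg one a)) as [Hlt|Heq]; [exact Hlt|].
      exfalso. apply Ea. symmetry. apply d_zero. auto. }
    destruct (small_inverse _ Hpos) as [k Hk]. exists (Nat.max n k).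
    intros y [<-|Hy] Hb.
    + apply (ball_antitone k) in Hb; [unfold ball in Hb; lra | lia].
    + apply Hn; [exact Hy | apply (ball_antitone _ (Nat.max n k)); [lia | exact Hb]].
Qed.

Lemma tap_nss : weil_complete G -> TAP G -> NSS G.
Proof.
  intros Hcomp HT. apply NNPP. intro Hn.
  destruct (nested_cube_nbhds G ball ball_open_nbhd) as [W [HW [HWball HWcube]]].
  assert (Hg : forall n, exists x, x <> one /\ forall m, W n (zpow G x m)).
  { intro n. apply NNPP. intro Hc. apply Hn, NSS_iff_no_small_cyclic.
    exists (W n). split; [apply HW | split; [apply HW|]].
    intros x Hx. apply NNPP. intro Hx1. apply Hc. eauto. }
  destruct (choice _ Hg) as [g Hg'].
  assert (W_base : forall U, nbhd G U one -> exists n, forall y, W n y -> U y).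
  { intros U HU. destruct (ball_base U HU) as [n Hn']. exists (S n). auto. }
  destruct (HT _ (range_absolutely_productive G Hcomp W (fun n => proj2 (HW n)) HWcube
                   W_base g (fun n => proj2 (Hg' n)))) as [l Hl].
  destruct (finite_avoids_ball l) as [n Hn'].
  apply (proj1 (Hg' (S n))), Hn'.
  - apply Hl. eauto.
  - apply HWball. rewrite <- zpow_1. apply (proj2 (Hg' (S n)) 1%Z).
Qed.

End Metric.

Theorem theorem5p4 (G : TopGroup) (Hmet : metrizable G) (Hcomp : weil_complete G) :
  (NSS G <-> STAP G) /\ (STAP G <-> HTAP G) /\ (HTAP G <-> TAP G).
Proof.
  destruct Hmet as [d [d_nonneg [d_zero [_ [d_triangle d_open]]]]].
  pose proof (nss_stap G). pose proof (stap_htap G). pose proof (htap_tap G).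
  pose proof (tap_nss G d d_nonneg d_zero d_triangle d_open Hcomp).
  tauto.
Qed.
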